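(* Let $k$ be a positive integer whose binary expansion has $m>2$ nonzero bits. Then the numerators of the fractions $s_{k,k}$ and $s_{2k}$, written in lowest terms, are both divisible by $2^{m-2}$.
   Context: For a partition $I=(i_1,\dots,i_r)$ of $k$, write $p_I=p_{i_1}\cdots p_{i_r}$ and let $s_I\in\mathbb{Q}$ denote the coefficient of $p_I$ in the $k$-th Hirzebruch $\mathcal{L}$-polynomial, i.e. $\mathcal{L}_k(p_1,\dots,p_k)=\sum_{|I|=k}s_Ip_I$, where $1+\mathcal{L}_1+\mathcal{L}_2+\cdots$ is the multiplicative sequence with characteristic power series $\sqrt{t}/\tanh\sqrt{t}$. In particular $s_k=\frac{2^{2k}(2^{2k-1}-1)|B_{2k}|}{(2k)!}$ (with $B_j$ the Bernoulli numbers) and $s_{k,k}=\tfrac12(s_k^2-s_{2k})$. *)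

From HB Require Import structures.
From mathcomp Require Import all_boot all_order all_algebra.
Set Implicit Arguments. Unset Strict Implicit. Unset Printing Implicit Defensive.
Import Order.TTheory GRing.Theory Num.Theory.
Local Open Scope ring_scope.

(* Bernoulli numbers (convention B_1 = -1/2; only even indices are used),
   via the recurrence  sum_{j=0}^{n} C(n+1,j) B_j = 0  (n >= 1), B_0 = 1.
   bern_seq n = [:: B_0; ...; B_n]. *)
Fixpoint bern_seq (n : nat) : seq rat :=
  match n with
  | 0 => [:: 1]
  | n'.+1 =>
      let s := bern_seq n' in
      rcons s (- (\sum_(j < n'.+1) ('C(n'.+2, j))%:R * nth 0 s j) / (n'.+2)%:R)
  end.

Definition bernoulli (n : nat) : rat := nth 0 (bern_seq n) n.

(* s_k : coefficient of p_k in the Hirzebruch L-polynomial L_k *)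
Definition s_single (k : nat) : rat :=
  (2 ^ (2 * k))%:R * ((2 ^ (2 * k).-1)%:R - 1) * `|bernoulli (2 * k)|
    / ((2 * k)`!)%:R.

(* s_{k,k} : coefficient of p_k^2 in L_{2k} *)
Definition s_double (k : nat) : rat :=
  (s_single k ^+ 2 - s_single (2 * k)) / 2.

(* number of nonzero bits in the binary expansion of k
   (bit i of k is odd (k %/ 2^i); all bits of k have index <= k) *)
Definition popcount (k : nat) : nat :=
  (\sum_(i < k.+1) odd (k %/ 2 ^ i))%N.

(* Write m for the binary digit sum s(k).  Legendre's formula gives
   v_2((2k)!) = 2k - s(k), and the weak von Staudt-Clausen fact that p B_n is
   p-integral gives v_2(B_(2k)) >= -1; hence v_2(s_k) >= s(k) - 1.  The latter
   comes from Faulhaber's formula at N = p^(n+1): the power sum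
   sum_(i < N) i^n is divisible by p^n, and solving for the top term isolates
   p B_n as an integer minus p-integral multiples of the p B_j, j < n.
   Since s(2k) = s(k), also v_2(s_(2k)) >= m - 1, and then
   v_2(s_(k,k)) = v_2((s_k^2 - s_(2k)) / 2) >= m - 2. *)

From HB Require Import structures.
From mathcomp Require Import all_boot all_order all_algebra.
From mathcomp Require Import zify ring.
Import Order.TTheory GRing.Theory Num.Theory.
Set Implicit Arguments. Unset Strict Implicit.

Local Open Scope ring_scope.

Definition pval_ge (p e : nat) (r : rat) : Prop :=
  exists (a : int) (q : nat), ~~ (p %| q)%N /\ r = (p ^ e)%N%:R * a%:~R / q%:R.

Section PadicValuation.

Variable p : nat.
Hypothesis p_pr : prime p.

Let natr_neq0 [q : nat] : ~~ (p %| q)%N -> q%:R != 0 :> rat.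
Proof. by apply: contra; rewrite pnatr_eq0 => /eqP ->; rewrite dvdn0. Qed.

Let ndvdM [q q' : nat] : ~~ (p %| q)%N -> ~~ (p %| q')%N -> ~~ (p %| q * q')%N.
Proof. by move=> hq hq'; rewrite Euclid_dvdM // negb_or hq hq'. Qed.

Lemma pval_geD e r s : pval_ge p e r -> pval_ge p e s -> pval_ge p e (r + s).
Proof.
move=> [a [q [pq ->]]] [b [q' [pq' ->]]].
exists (a * q'%:Z + b * q%:Z), (q * q')%N; split; first exact: ndvdM.
have := natr_neq0 pq; have := natr_neq0 pq'.
by rewrite natrM rmorphD !rmorphM /= => h' h; field; rewrite h h'.
Qed.

Lemma pval_geN e r : pval_ge p e r -> pval_ge p e (- r).
Proof.
by move=> [a [q [pq ->]]]; exists (- a), q; rewrite rmorphN /= mulrN mulNr.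
Qed.

Lemma pval_geB e r s : pval_ge p e r -> pval_ge p e s -> pval_ge p e (r - s).
Proof. by move=> hr hs; apply/pval_geD/pval_geN. Qed.

Lemma pval_geM e f r s :
  pval_ge p e r -> pval_ge p f s -> pval_ge p (e + f) (r * s).
Proof.
move=> [a [q [pq ->]]] [b [q' [pq' ->]]].
exists (a * b), (q * q')%N; split; first exact: ndvdM.
have := natr_neq0 pq; have := natr_neq0 pq'.
by rewrite natrM expnD natrM rmorphM /= => h' h; field; rewrite h h'.
Qed.

Lemma pval_geW e f r : (f <= e)%N -> pval_ge p e r -> pval_ge p f r.
Proof.
move=> fe [a [q [pq ->]]]; exists ((p ^ (e - f))%N%:Z * a), q; split => //.
by rewrite rmorphM /= pmulrn mulrA -natrM -expnD subnKC.
Qed.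

Lemma pval_ge_sum e (I : Type) (s : seq I) (F : I -> rat) :
  (forall i, pval_ge p e (F i)) -> pval_ge p e (\sum_(i <- s) F i).
Proof.
move=> hF; elim: s => [|x s IH]; last by rewrite big_cons; apply: pval_geD.
by rewrite big_nil; exists 0, 1%N; rewrite dvdn1 gtn_eqF ?prime_gt1 // mulr0 mul0r.
Qed.

Lemma pval_ge_norm e r : pval_ge p e r -> pval_ge p e `|r|.
Proof. by move=> hr; case: (ler0P r) => _ //; apply: pval_geN. Qed.

Lemma pval_ge_nat (n : nat) : pval_ge p 0 n%:R.
Proof.
by exists n, 1%N; rewrite dvdn1 gtn_eqF ?prime_gt1 // expn0 mul1r divr1.
Qed.

Lemma pval_ge_expn e : pval_ge p e (p ^ e)%N%:R.
Proof.
by exists 1, 1%N; rewrite dvdn1 gtn_eqF ?prime_gt1 // mulr1 divr1.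
Qed.

Lemma pval_ge_invn (u : nat) : ~~ (p %| u)%N -> pval_ge p 0 u%:R^-1.
Proof. by move=> pu; exists 1, u; rewrite expn0 mulr1 mul1r. Qed.

Lemma pval_ge_divp e r : pval_ge p e.+1 r -> pval_ge p e (r / p%:R).
Proof.
move=> [a [q [pq ->]]]; exists a, q; split => //.
have := natr_neq0 pq; have : p%:R != 0 :> rat by rewrite pnatr_eq0 -lt0n prime_gt0.
by rewrite expnS natrM => hp hq; field; rewrite hp hq.
Qed.

Lemma pval_ge_expn_divn m : (0 < m)%N -> pval_ge p 0 ((p ^ m)%N%:R / m%:R).
Proof.
move=> m_gt0; have [u pu def_m] := pfactor_coprime p_pr m_gt0.
set e := logn p m in def_m.
have le_em : (e < m)%N.
  apply: leq_trans (ltn_expl e (prime_gt1 p_pr)) _.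
  by apply: dvdn_leq => //; rewrite def_m dvdn_mull.
rewrite prime_coprime // in pu.
have -> : (p ^ m = p ^ (m - e) * p ^ e)%N by rewrite -expnD subnK // ltnW.
exists (p ^ (m - e))%N%:Z, u; split => //.
rewrite [in X in _ / X]def_m !natrM expn0 mul1r pmulrn.
have := natr_neq0 pu; have : (p ^ e)%N%:R != 0 :> rat.
  by rewrite pnatr_eq0 expn_eq0 negb_and -lt0n prime_gt0.
by move=> hpe hu; field; rewrite hpe hu.
Qed.

Lemma pval_ge_expn_pow_divn m d : (0 < m)%N -> (0 < d)%N ->
  pval_ge p 0 ((p ^ m)%N%:R ^+ d / m%:R).
Proof.
move=> m_gt0; case: d => // d _.
have -> : (p ^ m)%N%:R ^+ d.+1 / m%:R = (p ^ m)%N%:R / m%:R * (p ^ (m * d))%N%:R :> rat.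
  by rewrite exprSr -natrX -expnM -mulrA mulrC.
have := pval_geM (pval_ge_expn_divn m_gt0) (pval_ge_expn (m * d)).
exact: pval_geW.
Qed.

Lemma pval_ge_numq e r : pval_ge p e r -> ((p ^ e)%N%:Z %| numq r)%Z.
Proof.
move=> [a [q [pq def_r]]].
have def_num : (numq r * q%:Z = (p ^ e)%N%:Z * a * denq r)%R.
  apply/eqP; rewrite -(eqr_int rat) !rmorphM /= numqE def_r pmulrn.
  by apply/eqP; have := natr_neq0 pq => hq; field.
have := congr1 absz def_num; rewrite !abszM /= => def_absnum.
have cop : coprime (p ^ e) q by rewrite coprimeXl // prime_coprime.
by rewrite dvdzE /= -(Gauss_dvdl _ cop) def_absnum -mulnA dvdn_mulr.
Qed.

End PadicValuation.

Lemma sum_expn_mod c M n :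
  (\sum_(i < c * M) i ^ n = c * \sum_(i < M) i ^ n %[mod M])%N.
Proof.
elim: c => [|c IH]; first by rewrite mul0n big_ord0.
have shift : (\sum_(i < c * M) (M + i) ^ n = \sum_(i < c * M) i ^ n %[mod M])%N.
  rewrite -[LHS]modn_summ -[RHS]modn_summ; congr (_ %% _)%N.
  by apply: eq_bigr => i _; rewrite -modnXm modnDl modnXm.
by rewrite mulSn big_split_ord /= -modnDmr shift IH modnDmr.
Qed.

Lemma dvdn_sum_expn p a n : (0 < p)%N -> (p ^ a %| \sum_(i < p ^ a.+1) i ^ n)%N.
Proof.
move=> p_gt0; elim: a => [|a IH]; first by rewrite dvd1n.
rewrite /dvdn [(p ^ a.+2)%N]expnS sum_expn_mod -/(dvdn _ _) expnS.
by rewrite dvdn_pmul2l // -expnS.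
Qed.

Lemma size_bern_seq n : size (bern_seq n) = n.+1.
Proof. by elim: n => [|n IH] //=; rewrite size_rcons IH. Qed.

Lemma nth_bern_seq n j : (j <= n)%N -> nth 0 (bern_seq n) j = bernoulli j.
Proof.
elim: n => [|n IH]; first by rewrite leqn0 => /eqP ->.
rewrite leq_eqVlt => /predU1P[-> //|lt_jn].
by rewrite /= nth_rcons size_bern_seq lt_jn IH.
Qed.

Lemma bernoulli_rec r :
  (0 < r)%N -> \sum_(j < r) 'C(r, j)%:R * bernoulli j = (r == 1)%N%:R.
Proof.
case: r => [|[|n]] // _; first by rewrite big_ord1 mul1r.
rewrite big_ord_recr /= binSn.
have def_B : bernoulli n.+1 =
    - (\sum_(j < n.+1) 'C(n.+2, j)%:R * bernoulli j) / n.+2%:R.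
  rewrite /bernoulli /= nth_rcons size_bern_seq ltnn eqxx; congr (- _ / _).
  by apply: eq_bigr => j _; rewrite nth_bern_seq // -ltnS.
have n2_neq0 : n.+2%:R != 0 :> rat by rewrite pnatr_eq0.
by rewrite def_B mulrC divfK // subrr.
Qed.

Lemma bin_mul_swap m j l : (j + l <= m)%N ->
  ('C(m, j) * 'C(m - j, l) = 'C(m, l) * 'C(m - l, j))%N.
Proof.
move=> le_jl_m.
have fact_prod_gt0 : (0 < j`! * l`! * (m - j - l)`!)%N by rewrite !muln_gt0 !fact_gt0.
apply/eqP; rewrite -(eqn_pmul2r fact_prod_gt0); apply/eqP.
transitivity m`!.
  by rewrite -(bin_fact (_ : j <= m)%N) -?(bin_fact (_ : l <= m - j)%N); [ring|lia|lia].
have -> : (m - j - l = m - l - j)%N by lia.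
by rewrite -(bin_fact (_ : l <= m)%N) -?(bin_fact (_ : j <= m - l)%N); [ring|lia|lia].
Qed.

Definition faulhaber_poly (n : nat) (x : rat) : rat :=
  \sum_(j < n.+1) 'C(n.+1, j)%:R * bernoulli j * x ^+ (n.+1 - j).

Lemma faulhaber_polyD1 n x :
  faulhaber_poly n (x + 1) - faulhaber_poly n x = n.+1%:R * x ^+ n.
Proof.
rewrite /faulhaber_poly -sumrB; set m := n.+1.
(* T j l is the x^l-part of the j-th difference; summing over j first, the
   Bernoulli recurrence kills every l except l = n. *)
pose T (j l : 'I_m) : rat := if (j + l < m)%N
  then ('C(m, l) * 'C(m - l, j))%:R * bernoulli j * x ^+ l else 0.
have expand (j : 'I_m) : 'C(m, j)%:R * bernoulli j * (x + 1) ^+ (m - j)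
    - 'C(m, j)%:R * bernoulli j * x ^+ (m - j) = \sum_(l < m) T j l.
  rewrite -mulrBr exprD1n big_ord_recr /= binn mulr1n addrK.
  rewrite (big_ord_widen m (fun l => x ^+ l *+ 'C(m - j, l)) (leq_subr j m)).
  rewrite big_mkcond mulr_sumr; apply: eq_bigr => l _; rewrite /T ltn_subRL.
  case: ifP => [lt_jl_m|_]; last by rewrite mulr0.
  rewrite -bin_mul_swap; last by lia.
  by rewrite -mulr_natl natrM; ring.
have collapse (l : 'I_m) : \sum_(j < m) T j l = 'C(m, l)%:R * x ^+ l * (m - l == 1)%N%:R.
  rewrite -bernoulli_rec ?subn_gt0 //.
  rewrite (big_ord_widen m (fun j => 'C(m - l, j)%:R * bernoulli j) (leq_subr l m)).
  rewrite [X in _ * X]big_mkcond mulr_sumr; apply: eq_bigr => j _.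
  rewrite /T ltn_subRL addnC.
  by case: ifP => _; [rewrite natrM; ring | rewrite mulr0].
rewrite (eq_bigr _ (fun j _ => expand j)) exchange_big.
rewrite (eq_bigr _ (fun l _ => collapse l)).
rewrite big_ord_recr /= big1 => [|l _]; last first.
  by rewrite /m subSn 1?ltnW // eqSS subn_eq0 leqNgt ltn_ord mulr0.
by rewrite add0r subSnn eqxx binSn mulr1 mulr_natl.
Qed.

Lemma faulhaber n N :
  faulhaber_poly n N%:R = n.+1%:R * (\sum_(i < N) i ^ n)%N%:R.
Proof.
elim: N => [|N IH].
  rewrite big_ord0 mulr0 /faulhaber_poly big1 // => j _.
  by rewrite subSn ?exprS ?mul0r ?mulr0 // -ltnS.
rewrite big_ord_recr /= natrD mulrDr -IH natrX -faulhaber_polyD1 -natr1.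
by rewrite [RHS]addrC subrK.
Qed.

Lemma pval_ge_bernoulli p n : prime p -> pval_ge p 0 (p%:R * bernoulli n).
Proof.
move=> p_pr; elim/ltn_ind: n => n IH.
set N : rat := (p ^ n.+1)%N%:R.
have [t def_t] := dvdnP (dvdn_sum_expn n n (prime_gt0 p_pr)).
have n1_neq0 : n.+1%:R != 0 :> rat by rewrite pnatr_eq0.
have pn_neq0 : (p ^ n)%N%:R != 0 :> rat.
  by rewrite pnatr_eq0 expn_eq0 negb_and -lt0n prime_gt0.
have N_def : N = p%:R * (p ^ n)%N%:R by rewrite /N expnS natrM.
set R := \sum_(j < n) 'C(n.+1, j)%:R * (p%:R * bernoulli j) * (N ^+ (n - j) / n.+1%:R).
have lower_terms : \sum_(j < n) 'C(n.+1, j)%:R * bernoulli j * N ^+ (n.+1 - j)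
    = n.+1%:R * (p ^ n)%N%:R * R.
  rewrite /R mulr_sumr; apply: eq_bigr => j _.
  by rewrite subSn 1?ltnW // exprS N_def; field; rewrite addrC natr1.
have faulhaber_eq := faulhaber n (p ^ n.+1).
rewrite /faulhaber_poly big_ord_recr /= binSn subSnn expr1 -/N in faulhaber_eq.
rewrite lower_terms in faulhaber_eq.
move/(canRL (addKr _)): faulhaber_eq; rewrite def_t natrM N_def => faulhaber_eq.
have -> : p%:R * bernoulli n = t%:R - R.
  apply: (mulfI (mulf_neq0 n1_neq0 pn_neq0)).
  transitivity (n.+1%:R * bernoulli n * (p%:R * (p ^ n)%N%:R)); first ring.
  by rewrite faulhaber_eq; ring.
apply: (pval_geB p_pr (pval_ge_nat p_pr t)); apply: (pval_ge_sum p_pr) => j.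
have v_coef := pval_geM p_pr (pval_ge_nat p_pr 'C(n.+1, j)) (IH j (ltn_ord j)).
have v_pow : pval_ge p 0 (N ^+ (n - j) / n.+1%:R).
  by apply: (pval_ge_expn_pow_divn p_pr); rewrite ?subn_gt0.
by have := pval_geM p_pr v_coef v_pow; rewrite !addn0.
Qed.

Section Popcount.
Local Open Scope nat_scope.

Lemma sum_bits_widen n L d : n < 2 ^ L ->
  \sum_(i < L + d) odd (n %/ 2 ^ i) = \sum_(i < L) odd (n %/ 2 ^ i).
Proof.
move=> lt_n_2L; rewrite big_split_ord /= [X in _ + X]big1 ?addn0 // => i _.
by rewrite divn_small // (leq_trans lt_n_2L) // leq_exp2l // leq_addr.
Qed.

Lemma popcount_sum L n : n < 2 ^ L -> popcount n = \sum_(i < L) odd (n %/ 2 ^ i).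
Proof.
move=> lt_n_2L; rewrite /popcount -(sum_bits_widen n.+1 lt_n_2L) addnC.
by rewrite sum_bits_widen // ltnW // ltn_expl.
Qed.

Lemma popcountE n : popcount n = odd n + popcount n./2.
Proof.
have lt_n_2n := ltn_expl n (ltnSn 1).
rewrite (@popcount_sum n.+1) ?(ltn_trans lt_n_2n) ?ltn_exp2l //.
rewrite big_ord_recl expn0 divn1 (@popcount_sum n) -?divn2; last first.
  by rewrite ltn_divLR // -expnSr (ltn_trans lt_n_2n) ?ltn_exp2l.
by congr (_ + _); apply: eq_bigr => i _; rewrite expnS divnMA.
Qed.

Lemma popcount_double n : popcount n.*2 = popcount n.
Proof. by rewrite popcountE odd_double doubleK. Qed.

Lemma fact_double_odd q : exists2 v, odd v & q.*2`! = 2 ^ q * q`! * v.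
Proof.
elim: q => [|q [v odd_v IH]]; first by exists 1.
exists (v * q.*2.+1); first by rewrite oddM odd_v /= odd_double.
by rewrite doubleS !factS IH expnS -!mul2n; ring.
Qed.

Lemma fact_popcount n : exists2 u, odd u & n`! * 2 ^ popcount n = 2 ^ n * u.
Proof.
elim/ltn_ind: n => n IH; case: (posnP n) => [-> | n_gt0].
  by exists 1 => //; rewrite /popcount big_ord1.
have [u odd_u IHu] : exists2 u, odd u & n./2`! * 2 ^ popcount n./2 = 2 ^ n./2 * u.
  by apply: IH; rewrite ltn_half_double -addnn; lia.
have [v odd_v def_fact] := fact_double_odd n./2.
rewrite popcountE -[in n`!](odd_double_half n) -[in 2 ^ n](odd_double_half n).
set q := n./2 in IHu def_fact *.
have exp_double : 2 ^ q.*2 = 2 ^ q * 2 ^ q by rewrite -addnn expnD.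
case: (odd n) => /=.
  exists (u * v * q.*2.+1); first by rewrite !oddM odd_u odd_v /= odd_double.
  rewrite !add1n factS def_fact !expnS exp_double.
  transitivity (q.*2.+1 * 2 * 2 ^ q * v * (q`! * 2 ^ popcount q)); first ring.
  by rewrite IHu; ring.
exists (u * v); first by rewrite oddM odd_u odd_v.
rewrite !add0n def_fact exp_double.
transitivity (2 ^ q * v * (q`! * 2 ^ popcount q)); first ring.
by rewrite IHu; ring.
Qed.

End Popcount.

Lemma pval_ge_double_s_single n : pval_ge 2 (popcount n) (2 * s_single n).
Proof.
have [u odd_u fact_eq] := fact_popcount n.*2.
rewrite popcount_double -mul2n in fact_eq.
have u_neq0 : u%:R != 0 :> rat by rewrite pnatr_eq0; apply: contraTneq odd_u => ->.
have fact_neq0 : (2 * n)`!%:R != 0 :> rat by rewrite pnatr_eq0 -lt0n fact_gt0.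
have exp_eq : (2 ^ (2 * n))%N%:R = (2 * n)`!%:R * (2 ^ popcount n)%N%:R / u%:R :> rat.
  by rewrite -natrM fact_eq natrM mulfK.
have -> : 2 * s_single n = (2 ^ popcount n)%N%:R * (u%:R^-1 *
    (((2 ^ (2 * n).-1)%N%:R - 1) * `|2%:R * bernoulli (2 * n)|)).
  by rewrite /s_single exp_eq normrM ger0_norm //; field; rewrite u_neq0 fact_neq0.
have pr2 : prime 2 by [].
have v_inv : pval_ge 2 0 u%:R^-1 by apply: pval_ge_invn; rewrite dvdn2 odd_u.
have v_mersenne : pval_ge 2 0 ((2 ^ (2 * n).-1)%N%:R - 1).
  by apply: (pval_geB pr2); [exact: pval_ge_nat | exact: (pval_ge_nat pr2 1)].
have v_bern := pval_ge_norm (pval_ge_bernoulli (2 * n) pr2).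
have v_rest := pval_geM pr2 v_inv (pval_geM pr2 v_mersenne v_bern).
have := pval_geM pr2 (pval_ge_expn pr2 (popcount n)) v_rest.
by rewrite !addn0.
Qed.

Lemma pval_ge_s_single n : (0 < popcount n)%N -> pval_ge 2 (popcount n).-1 (s_single n).
Proof.
move=> pc_gt0; have := pval_ge_double_s_single n.
rewrite -{1}(prednK pc_gt0) => /(pval_ge_divp (p := 2) isT).
by rewrite mulrC mulKf.
Qed.

Theorem proposition2p1 (k : nat) :
  (0 < k)%N -> (2 < popcount k)%N ->
  (((2 ^ (popcount k - 2))%N%:Z %| numq (s_double k))%Z /\
   ((2 ^ (popcount k - 2))%N%:Z %| numq (s_single (2 * k)))%Z).
Proof.
have pr2 : prime 2 by [].
move=> _ m_gt2; have m_gt0 : (0 < popcount k)%N by apply: ltn_trans m_gt2.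
have v_k := pval_ge_s_single m_gt0.
have := pval_ge_s_single (n := k.*2); rewrite popcount_double -mul2n => /(_ m_gt0) v_2k.
have def_m1 : (popcount k).-1 = (popcount k - 2).+1 by lia.
rewrite def_m1 in v_k v_2k.
split; apply: (pval_ge_numq pr2); last exact: pval_geW (leqnSn _) v_2k.
rewrite /s_double expr2; apply/(pval_ge_divp pr2)/(pval_geB pr2 _ v_2k).
exact: pval_geW (leq_addr _ _) (pval_geM pr2 v_k v_k).
Qed.
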